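(* Let $\mathscr{A}\in\mathbb{R}^{n\times n\times n_3}$, $\mathscr{V}\in\mathbb{R}^{n\times s\times n_3}$, and suppose $m$ steps of the tensor tubal-global Arnoldi process described in the context have been run (without breakdown). Then the tensors $\mathscr{V}_1,\dots,\mathscr{V}_m$ form a T-orthonormal basis of the tubal-global Krylov subspace $\mathscr{TK}^g_m(\mathscr{A},\mathscr{V})$.
   Context: All tensors are real third-order arrays. $\widehat{\mathscr{A}}=\mathscr{A}\times_3F_{n_3}$ denotes the tensor obtained by applying the discrete Fourier transform ($F_{n_3}$ with entries $\omega^{(i-1)(j-1)}$, $\omega=e^{-2\pi\mathrm{i}/n_3}$) to each tube; its frontal slices $\hat A^{(k)}$ are the Fourier slices. T-product: $\mathscr{A}\star\mathscr{B}$ has Fourier slices $\hat A^{(k)}\hat B^{(k)}$; $\mathscr{A}^0$ is the identity tensor (first frontal slice $I_n$, others zero) and $\mathscr{A}^{i}=\mathscr{A}\star\mathscr{A}^{i-1}$. Transpose $\mathscr{A}^T$: transpose each frontal slice and reverse the order of frontal slices $2,\dots,n_3$. A tube is an element of $\mathbb{R}^{1\times1\times n_3}$; $\mathbf{e}$ is the tube with entries $(1,0,\dots,0)$ and $\mathbf{o}$ the zero tube. For a tube $\mathbf{a}$, $\mathbf{a}\divideontimes\mathscr{B}$ is the tensor whose $(i,j)$ tube is $\mathbf{a}\star\mathscr{B}(i,j,:)$. T-trace: the tube whose $k$-th Fourier slice is the trace of the $k$-th Fourier slice. Tubal inner product: $\langle\mathscr{X},\mathscr{Y}\rangle_T=\text{T-trace}(\mathscr{X}^T\star\mathscr{Y})$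 for $\mathscr{X},\mathscr{Y}\in\mathbb{R}^{n\times s\times n_3}$. A family $\mathscr{V}_1,\dots,\mathscr{V}_m$ is T-orthonormal if $\langle\mathscr{V}_i,\mathscr{V}_j\rangle_T=\mathbf{e}$ for $i=j$ and $\mathbf{o}$ for $i\ne j$. Tubal-global Krylov subspace: $\mathscr{TK}^g_m(\mathscr{A},\mathscr{V})=\{\sum_{i=1}^m\mathbf{a}_i\divideontimes(\mathscr{A}^{i-1}\star\mathscr{V}):\ \mathbf{a}_i\in\mathbb{R}^{1\times1\times n_3}\}$. Normalization of $\mathscr{W}$: $\mathbf{a}$ is the tube whose $k$-th Fourier coefficient is $\|\hat W^{(k)}\|_F$ (breakdown if one is zero), and $\mathscr{Q}$ has Fourier slices $\hat W^{(k)}/\|\hat W^{(k)}\|_F$; output $[\mathscr{Q},\mathbf{a}]$. Tubal-global Arnoldi process: $[\mathscr{V}_1,\mathbf{r}_{1,1}]=\mathrm{Normalization}(\mathscr{V})$; for $j=1,\dots,m$: $\mathscr{W}=\mathscr{A}\star\mathscr{V}_j$; for $i=1,\dots,j$: $\mathbf{h}_{i,j}=\langle\mathscr{V}_i,\mathscr{W}\rangle_T$, $\mathscr{W}\leftarrow\mathscr{W}-\mathbf{h}_{i,j}\divideontimes\mathscr{V}_i$; then $[\mathscr{V}_{j+1},\mathbf{h}_{j+1,j}]=\mathrm{Normalization}(\mathscr{W})$. *)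

From HB Require Import structures.
From mathcomp Require Import all_boot all_order all_algebra.
From mathcomp Require Import reals trigo.
From mathcomp Require Import complex.
Set Implicit Arguments.
Unset Strict Implicit.
Unset Printing Implicit Defensive.
Import GRing.Theory Num.Theory.
Local Open Scope ring_scope.

Section TubalGlobal.
Variable R : realType.
Local Notation C := R[i].

(* A real third-order tensor in R^{m x p x q}, stored by frontal slices
   (the k-th frontal slice is A k : 'M_(m,p), k : 'I_q). *)
Definition tensor (m p q : nat) := {ffun 'I_q -> 'M[R]_(m, p)}.

Definition tube (q : nat) := tensor 1 1 q.

Definition omega (q : nat) : C :=
  (cos (2 * pi / q%:R) -i* sin (2 * pi / q%:R))%C.

(* Fourier slices: hat A^(k) = sum_j omega^(k j) A^(j)  (0-based indices),
   i.e. A x_3 F_q with (F_q)_{kj} = omega^{(k-1)(j-1)} in 1-based indices. *)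
Definition fslice m p q (A : tensor m p q) (k : 'I_q) : 'M[C]_(m, p) :=
  \sum_(j < q) (omega q ^+ (k * j)) *: map_mx (fun x : R => x%:C%C) (A j).

(* The real tensor whose Fourier slices are X k (inverse DFT along tubes;
   X is conjugate-symmetric in all uses below, so the inverse transform is
   real and taking the real part loses nothing). *)
Definition of_fourier m p q (X : 'I_q -> 'M[C]_(m, p)) : tensor m p q :=
  [ffun j : 'I_q => map_mx (@complex.Re R)
     ((q%:R)^-1 *: \sum_(k < q) ((omega q)^-1 ^+ (k * j)) *: X k)].

Definition tprod m n p q (A : tensor m n q) (B : tensor n p q) : tensor m p q :=
  of_fourier (fun k => fslice A k *m fslice B k).

Definition tid n q : tensor n n q :=
  [ffun k : 'I_q => if val k == 0%N then 1%:M else 0].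

Fixpoint tpow n q (A : tensor n n q) (i : nat) : tensor n n q :=
  match i with
  | 0 => tid n q
  | i'.+1 => tprod A (tpow A i')
  end.

Definition trev q (k : 'I_q) : 'I_q :=
  Ordinal (ltn_pmod (q - k) (leq_ltn_trans (leq0n k) (ltn_ord k))).

Definition ttr m p q (A : tensor m p q) : tensor p m q :=
  [ffun k => (A (trev k))^T].

Definition te q : tube q := [ffun k : 'I_q => if val k == 0%N then 1 else 0].
Definition to q : tube q := 0.

Definition ttube m p q (B : tensor m p q) (i : 'I_m) (j : 'I_p) : tube q :=
  [ffun k => (B k i j)%:M].

Definition tscale m p q (a : tube q) (B : tensor m p q) : tensor m p q :=
  [ffun k => \matrix_(i, j) (tprod a (ttube B i j) k) 0 0].

Definition ttrace n q (A : tensor n n q) : tube q :=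
  of_fourier (fun k => (\tr (fslice A k))%:M).

Definition tinner n s q (X Y : tensor n s q) : tube q :=
  ttrace (tprod (ttr X) Y).

Definition fnorm m p (X : 'M[C]_(m, p)) : R :=
  Num.sqrt (\sum_(i < m) \sum_(j < p) ((complex.Re (X i j)) ^+ 2 + (complex.Im (X i j)) ^+ 2)).

Definition no_breakdown m p q (W : tensor m p q) : Prop :=
  forall k : 'I_q, fnorm (fslice W k) != 0.

(* Normalization(W) = [Q, a] *)
Definition normQ m p q (W : tensor m p q) : tensor m p q :=
  of_fourier (fun k => ((fnorm (fslice W k))^-1)%:C%C *: fslice W k).
Definition normA m p q (W : tensor m p q) : tube q :=
  of_fourier (fun k => ((fnorm (fslice W k))%:C%C)%:M).

Definition in_TKg n s q (m : nat) (A : tensor n n q) (V : tensor n s q)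
  (X : tensor n s q) : Prop :=
  exists a : nat -> tube q,
    X = \sum_(1 <= i < m.+1) tscale (a i) (tprod (tpow A i.-1) V).

(* Vs j = V_j, H i j = h_{i,j}, r = r_{1,1} (1-based indices);
   W j i = the tensor W in step j after the first i orthogonalization
   updates (W j 0 = A * V_j). *)
Definition arnoldi_run n s q (m : nat) (A : tensor n n q) (V : tensor n s q)
  (Vs : nat -> tensor n s q) (H : nat -> nat -> tube q) (r : tube q)
  (W : nat -> nat -> tensor n s q) : Prop :=
  [/\ (no_breakdown V /\ Vs 1%N = normQ V /\ r = normA V),
      (forall j, (1 <= j <= m)%N -> W j 0%N = tprod A (Vs j)),
      (forall j i, (1 <= j <= m)%N -> (1 <= i <= j)%N ->
          H i j = tinner (Vs i) (W j i.-1) /\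
          W j i = W j i.-1 - tscale (H i j) (Vs i)) &
      (forall j, (1 <= j <= m)%N ->
          [/\ no_breakdown (W j j), Vs j.+1 = normQ (W j j)
            & H j.+1 j = normA (W j j)])].

End TubalGlobal.

(* The discrete Fourier transform along tubes turns every tubal operation into
   an operation on Fourier slices: the T-product becomes the product of slices,
   tube scaling becomes scaling by a complex number and the tubal inner product
   becomes the Frobenius inner product of slices.  Slice by slice, the
   tubal-global Arnoldi process is therefore the classical modified Gram-Schmidt
   Arnoldi process, whose vectors are orthonormal; orthonormality then gives
   independence over tubes.  Normalization is invertible (W = a * Q), so the
   Arnoldi relation A * V_j = sum_(i <= j+1) h_(i,j) * V_i shows, by induction
   on j, that V_1, ..., V_j and V, A * V, ..., A^(j-1) * V span the same tube
   module. *)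

From HB Require Import structures.
From mathcomp Require Import all_boot all_order all_algebra.
From mathcomp Require Import reals trigo complex.
From mathcomp Require Import ring lra.
Set Implicit Arguments.
Unset Strict Implicit.
Unset Printing Implicit Defensive.
Import Order.TTheory GRing.Theory Num.Theory.
Local Open Scope ring_scope.

(* Rewriting with [rmorphM] and its relatives leaves [conjc] in a form that
   later rewrites do not match; these restatements keep it as [_^*]. *)
Section Conjugation.
Variable R : rcfType.
Implicit Types (a b : R[i]).

Lemma conjcM a b : ((a * b)^* )%C = (a^* )%C * (b^* )%C.
Proof. exact: rmorphM. Qed.

Lemma conjcX a d : ((a ^+ d)^* )%C = (a^* )%C ^+ d.
Proof. exact: rmorphXn. Qed.

Lemma conjcV a : ((a^-1)^* )%C = (a^* )%C^-1.
Proof. exact: fmorphV. Qed.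

Lemma conjcMn a d : ((a *+ d)^* )%C = (a^* )%C *+ d.
Proof. exact: rmorphMn. Qed.

Lemma conjc_sum I (r : seq I) (P : pred I) (F : I -> R[i]) :
  ((\sum_(i <- r | P i) F i)^* )%C = \sum_(i <- r | P i) (F i)^*%C.
Proof. exact: rmorph_sum. Qed.

End Conjugation.

Section FrobeniusDot.
Variables (R : rcfType) (m p : nat).
Implicit Types (M N : 'M[R[i]]_(m, p)).

Definition fdot M N : R[i] := \sum_(i < m) \sum_(j < p) (M i j)^*%C * N i j.

Lemma fdotDr M N1 N2 : fdot M (N1 + N2) = fdot M N1 + fdot M N2.
Proof.
rewrite /fdot -big_split; apply: eq_bigr => i _; rewrite -big_split.
by apply: eq_bigr => j _; rewrite mxE mulrDr.
Qed.

Lemma fdotBr M N1 N2 : fdot M (N1 - N2) = fdot M N1 - fdot M N2.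
Proof.
rewrite /fdot -sumrB; apply: eq_bigr => i _; rewrite -sumrB.
by apply: eq_bigr => j _; rewrite !mxE mulrBr.
Qed.

Lemma fdotZr M N a : fdot M (a *: N) = a * fdot M N.
Proof.
rewrite /fdot mulr_sumr; apply: eq_bigr => i _; rewrite mulr_sumr.
by apply: eq_bigr => j _; rewrite mxE mulrCA.
Qed.

Lemma fdotZl M N a : fdot (a *: M) N = (a^* )%C * fdot M N.
Proof.
rewrite /fdot mulr_sumr; apply: eq_bigr => i _; rewrite mulr_sumr.
by apply: eq_bigr => j _; rewrite mxE conjcM mulrA.
Qed.

Lemma fdot0r M : fdot M 0 = 0.
Proof. by rewrite -(subrr (0 : 'M[R[i]]_(m, p))) fdotBr subrr. Qed.

Lemma fdot_sumr M I (r : seq I) (P : pred I) (F : I -> 'M[R[i]]_(m, p)) :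
  fdot M (\sum_(i <- r | P i) F i) = \sum_(i <- r | P i) fdot M (F i).
Proof.
elim/big_rec2: _ => [|i N fN _ <-]; [exact: fdot0r | exact: fdotDr].
Qed.

Lemma fdotC M N : fdot N M = ((fdot M N)^* )%C.
Proof.
rewrite /fdot conjc_sum; apply: eq_bigr => i _; rewrite conjc_sum.
by apply: eq_bigr => j _; rewrite conjcM conjcK mulrC.
Qed.

End FrobeniusDot.

Section FrobeniusNorm.
Variables (R : realType) (m p : nat).

Lemma fdot_self (M : 'M[R[i]]_(m, p)) : fdot M M = ((fnorm M) ^+ 2)%:C%C.
Proof.
rewrite /fnorm sqr_sqrtr; last first.
  by apply: sumr_ge0 => i _; apply: sumr_ge0 => j _; rewrite addr_ge0 ?sqr_ge0.
rewrite /fdot rmorph_sum; apply: eq_bigr => i _; rewrite rmorph_sum.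
apply: eq_bigr => j _; case: (M i j) => a b; simpc.
by rewrite /= !expr2 [b * a]mulrC subrr.
Qed.

Lemma fdot_normalized (M : 'M[R[i]]_(m, p)) : fnorm M != 0 ->
  fdot (((fnorm M)^-1)%:C%C *: M) (((fnorm M)^-1)%:C%C *: M) = 1.
Proof.
move=> M_nz; rewrite fdotZl fdotZr conjc_real fdot_self -!rmorphM /=.
by rewrite mulrA -expr2 -exprMn mulVf // expr1n.
Qed.

End FrobeniusNorm.

Section RootOfUnity.
Variables (R : realType) (q : nat).
Local Notation w := (omega R q).

Lemma omegaX d : w ^+ d =
  (cos (d%:R * (2 * pi / q%:R)) -i* sin (d%:R * (2 * pi / q%:R)))%C.
Proof.
set t := 2 * pi / q%:R.
elim: d => [|d IH]; first by rewrite expr0 mul0r cos0 sin0 oppr0.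
rewrite exprSr IH /omega -/t -[((_ -i* _) * (_ -i* _))%C]/(_ +i* _)%C.
by rewrite -natr1 mulrDl mul1r cosD sinD; congr (_ +i* _)%C; ring.
Qed.

Lemma omega_prim : (0 < q)%N -> q.-primitive_root w.
Proof.
move=> q_gt0; rewrite /primitive_root_of_unity q_gt0 /=.
apply/forallP => i; rewrite unity_rootE omegaX.
have qR : q%:R != 0 :> R by rewrite pnatr_eq0 -lt0n.
have [->|Ni] := eqVneq i.+1 q.
  by rewrite mulrC divfK // mulrC mulr_natr cos2pi sin2pi oppr0 !eqxx.
rewrite eqbF_neg; apply/negP => /eqP [cos1 _].
pose x : R := i.+1%:R * (2 * pi / q%:R) / 2.
have x_in : 0 < x < pi.
  have iq : (i.+1 < q)%N by rewrite ltn_neqAle Ni ltn_ord.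
  have -> : x = pi * (i.+1%:R / q%:R) by rewrite /x; field.
  rewrite mulr_gt0 ?divr_gt0 ?ltr0n ?pi_gt0 //=.
  by rewrite gtr_pMr ?pi_gt0 // ltr_pdivrMr ?ltr0n // mul1r ltr_nat.
have : cos (x *+ 2) = 1 by rewrite -mulr_natr /x divfK ?pnatr_eq0.
rewrite cos_mulr2n => cos2x.
have /eqP : sin x ^+ 2 = 0 by rewrite sin2cos2; lra.
by rewrite expf_eq0 /= => /eqP sx0; move: (sin_gt0_pi x_in); rewrite sx0 ltxx.
Qed.

Lemma omega_conjM : (w^* )%C * w = 1.
Proof.
have := cos2Dsin2 (2 * pi / q%:R : R); rewrite /omega; set t := 2 * pi / q%:R.
simpc => h; apply/eqP; rewrite eq_complex /= -h.
by apply/andP; split; apply/eqP; ring.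
Qed.

Lemma omega_neq0 : w != 0.
Proof.
by apply/eqP => w0; move: omega_conjM; rewrite w0 mulr0 => /eqP; rewrite eq_sym oner_eq0.
Qed.

Lemma omega_conj : (w^* )%C = w^-1.
Proof. by apply: (mulIf omega_neq0); rewrite omega_conjM mulVf ?omega_neq0. Qed.

End RootOfUnity.

Section DiscreteFourier.
Variables (R : realType) (q : nat).
Local Notation C := R[i].
Local Notation w := (omega R q).

Lemma sum_expr_unity (u : C) : u ^+ q = 1 ->
  \sum_(k < q) u ^+ k = if u == 1 then q%:R else 0.
Proof.
move=> uq; have [->|u1] := eqVneq u 1.
  by rewrite (eq_bigr (fun _ => 1)) ?sumr_const ?card_ord // => k _; rewrite expr1n.
have /eqP := subrX1 u q; rewrite uq subrr eq_sym mulf_eq0 subr_eq0.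
by rewrite (negPf u1) => /eqP.
Qed.

Lemma trevK : involutive (@trev q).
Proof.
move=> k; apply: val_inj => /=.
have q_gt0 : (0 < q)%N by apply: leq_ltn_trans (ltn_ord k).
have [->|k_gt0] := posnP k; first by rewrite subn0 modnn subn0 modnn.
rewrite (@modn_small (q - k)) ?ltn_subrL ?k_gt0 ?q_gt0 //.
by rewrite subKn ?modn_small // ltnW.
Qed.

Lemma trev_inj : injective (@trev q).
Proof. exact: inv_inj trevK. Qed.

Lemma omega_trev (k : 'I_q) j : w ^+ (trev k * j) = w^-1 ^+ (k * j).
Proof.
have w_prim : q.-primitive_root w.
  by apply: omega_prim; apply: leq_ltn_trans (ltn_ord k).
apply: (mulIf (expf_neq0 (k * j) (omega_neq0 R q))).
rewrite -exprMn mulVf ?(omega_neq0 R q) // expr1n exprM (prim_expr_mod w_prim).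
rewrite -exprM -exprD -mulnDl subnK ?(ltnW (ltn_ord k)) //.
by rewrite exprM (prim_expr_order w_prim) expr1n.
Qed.

Lemma omega_orth (j j' : 'I_q) :
  \sum_(k < q) w^-1 ^+ (k * j) * w ^+ (k * j') = if j == j' then q%:R else 0.
Proof.
have w_prim : q.-primitive_root w.
  by apply: omega_prim; apply: leq_ltn_trans (ltn_ord j).
have w0 := omega_neq0 R q.
have -> : (j == j') = (w^-1 ^+ j * w ^+ j' == 1).
  rewrite -(inj_eq (mulfI (expf_neq0 j w0))) mulrA -exprMn mulfV //.
  by rewrite expr1n mul1r mulr1 eq_sym (eq_prim_root_expr w_prim) !modn_small.
rewrite -sum_expr_unity; last first.
  by rewrite exprMn -!exprM ![(_ * q)%N]mulnC !exprM exprVn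
    (prim_expr_order w_prim) invr1 !expr1n mulr1.
by apply: eq_bigr => k _; rewrite exprMn -!exprM ![(k * _)%N]mulnC.
Qed.

Lemma sum_delta (f : 'I_q -> C) j :
  \sum_(j' < q) (if j == j' then q%:R else 0) * f j' = q%:R * f j.
Proof.
rewrite (bigD1 j) //= eqxx big1 ?addr0 // => j' /negbTE.
by rewrite eq_sym => ->; rewrite mul0r.
Qed.

Lemma natr_ord_neq0 (k : 'I_q) : (q%:R : C) != 0.
Proof. by rewrite pnatr_eq0 -lt0n; apply: leq_ltn_trans (ltn_ord k). Qed.

Lemma fsliceE m p (A : tensor R m p q) k x y :
  fslice A k x y = \sum_(j < q) w ^+ (k * j) * (A j x y)%:C%C.
Proof. by rewrite /fslice summxE; apply: eq_bigr => j _; rewrite !mxE. Qed.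

Lemma of_fourierE m p (X : 'I_q -> 'M[C]_(m, p)) j x y :
  of_fourier X j x y =
  complex.Re ((q%:R)^-1 * \sum_(k < q) w^-1 ^+ (k * j) * X k x y).
Proof.
rewrite /of_fourier ffunE !mxE summxE; congr (complex.Re (_ * _)).
by apply: eq_bigr => k _; rewrite !mxE.
Qed.

Lemma fsliceK m p : cancel (@fslice R m p q) (@of_fourier R m p q).
Proof.
move=> A; apply/ffunP => j; apply/matrixP => x y; rewrite of_fourierE.
under eq_bigr do rewrite fsliceE mulr_sumr.
rewrite exchange_big /=.
under eq_bigr do (under eq_bigr do rewrite mulrA; rewrite -mulr_suml omega_orth).
by rewrite sum_delta mulrA mulVf ?natr_ord_neq0 // mul1r.
Qed.

Lemma eq_of_fourier m p (X Y : 'I_q -> 'M[C]_(m, p)) :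
  (forall k, X k = Y k) -> of_fourier X = of_fourier Y.
Proof.
move=> eqXY; apply/ffunP => j; apply/matrixP => x y.
rewrite [LHS]of_fourierE [RHS]of_fourierE.
by under eq_bigr do rewrite eqXY.
Qed.

Lemma tensorP m p (A B : tensor R m p q) :
  (forall k, fslice A k = fslice B k) -> A = B.
Proof. by move=> eqAB; rewrite -(fsliceK A) -(fsliceK B); apply: eq_of_fourier. Qed.

Definition conj_sym m p (X : 'I_q -> 'M[C]_(m, p)) :=
  forall k x y, X (trev k) x y = ((X k x y)^*)%C.

Lemma omega_conjX d : ((w ^+ d)^*)%C = w^-1 ^+ d.
Proof. by rewrite conjcX omega_conj. Qed.

Lemma fslice_conj_sym m p (A : tensor R m p q) : conj_sym (fslice A).
Proof.
move=> k x y; rewrite !fsliceE conjc_sum; apply: eq_bigr => j _.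
by rewrite conjcM conjc_real omega_conjX omega_trev.
Qed.

Lemma of_fourierK m p (X : 'I_q -> 'M[C]_(m, p)) :
  conj_sym X -> forall k, fslice (of_fourier X) k = X k.
Proof.
move=> symX k; apply/matrixP => x y; rewrite fsliceE.
pose Y j := (q%:R)^-1 * \sum_(k < q) w^-1 ^+ (k * j) * X k x y.
have Y_real j : (complex.Re (Y j))%:C%C = Y j.
  suff Y_conj : ((Y j)^*)%C = Y j by rewrite ReJ_add Y_conj; field.
  rewrite /Y conjcM conjcV conjc_nat conjc_sum; congr (_ * _).
  rewrite (reindex_inj trev_inj); apply: eq_bigr => i _.
  by rewrite conjcM conjcX conjcV omega_conj invrK omega_trev symX conjcK.
have orth (i : 'I_q) : \sum_(j < q) w ^+ (k * j) * w^-1 ^+ (i * j) =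
    if k == i then q%:R else 0.
  rewrite eq_sym -omega_orth; apply: eq_bigr => j _.
  by rewrite mulrC ![(_ * j)%N]mulnC.
under eq_bigr do rewrite of_fourierE -/(Y _) Y_real /Y mulrCA mulr_sumr.
rewrite -mulr_sumr exchange_big /=.
under eq_bigr do (under eq_bigr do rewrite mulrA; rewrite -mulr_suml orth).
by rewrite sum_delta mulrA mulVf ?natr_ord_neq0 // mul1r.
Qed.

End DiscreteFourier.

Section FourierSlices.
Variables (R : realType) (q : nat).
Local Notation C := R[i].
Local Notation tensor m p := (tensor R m p q).

Lemma conj_sym_mul m n p (X : 'I_q -> 'M[C]_(m, n)) (Y : 'I_q -> 'M[C]_(n, p)) :
  conj_sym X -> conj_sym Y -> conj_sym (fun k => X k *m Y k).
Proof.
move=> symX symY k x y; rewrite !mxE conjc_sum; apply: eq_bigr => l _.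
by rewrite symX symY conjcM.
Qed.

Lemma conj_sym_scalar (f : 'I_q -> C) :
  (forall k, f (trev k) = ((f k)^*)%C) -> conj_sym (fun k => (f k)%:M : 'M_1).
Proof. by move=> symf k x y; rewrite !mxE symf conjcMn. Qed.

Lemma fslice_tprod m n p (A : tensor m n) (B : tensor n p) k :
  fslice (tprod A B) k = fslice A k *m fslice B k.
Proof. by rewrite of_fourierK //; apply: conj_sym_mul; apply: fslice_conj_sym. Qed.

Lemma fsliceD m p (A B : tensor m p) k :
  fslice (A + B) k = fslice A k + fslice B k.
Proof.
apply/matrixP => x y; rewrite !mxE !fsliceE -big_split /=.
by apply: eq_bigr => j _; rewrite !ffunE !mxE rmorphD mulrDr.
Qed.

Lemma fslice0 m p k : fslice (0 : tensor m p) k = 0.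
Proof.
apply/matrixP => x y; rewrite !mxE fsliceE big1 // => j _.
by rewrite !ffunE !mxE mulr0.
Qed.

Lemma fsliceN m p (A : tensor m p) k : fslice (- A) k = - fslice A k.
Proof. by apply/eqP; rewrite -subr_eq0 opprK -fsliceD addNr fslice0. Qed.

Lemma fsliceB m p (A B : tensor m p) k :
  fslice (A - B) k = fslice A k - fslice B k.
Proof. by rewrite fsliceD fsliceN. Qed.

Lemma fslice_sum m p I (r : seq I) (P : pred I) (F : I -> tensor m p) k :
  fslice (\sum_(i <- r | P i) F i) k = \sum_(i <- r | P i) fslice (F i) k.
Proof.
elim/big_rec2: _ => [|i B FB _ <-]; [exact: fslice0 | exact: fsliceD].
Qed.

Lemma fslice_tscale m p (a : tube R q) (B : tensor m p) k :
  fslice (tscale a B) k = fslice a k 0 0 *: fslice B k.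
Proof.
have tubeE x y : fslice (ttube B x y) k 0 0 = fslice B k x y.
  by rewrite !fsliceE; apply: eq_bigr => j _; rewrite ffunE !mxE mulr1n.
apply/matrixP => x y; rewrite [RHS]mxE -tubeE.
have -> : fslice a k 0 0 * fslice (ttube B x y) k 0 0 =
          fslice (tprod a (ttube B x y)) k 0 0.
  by rewrite fslice_tprod mxE big_ord1.
by rewrite !fsliceE; apply: eq_bigr => j _; rewrite ffunE !mxE.
Qed.

Lemma fslice_tid n k : fslice (tid R n q) k = 1%:M.
Proof.
have q_gt0 : (0 < q)%N by apply: leq_ltn_trans (ltn_ord k).
apply/matrixP => x y; rewrite fsliceE (bigD1 (Ordinal q_gt0)) //= big1 ?addr0.
  by rewrite ffunE /= muln0 expr0 mul1r !mxE; case: (x == y).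
move=> j j_neq0; rewrite ffunE; case: eqP => [j0|_]; last by rewrite mxE mulr0.
by case/eqP: j_neq0; apply: val_inj.
Qed.

Lemma te_tid : te R q = tid R 1 q.
Proof. by apply/ffunP => k; rewrite !ffunE. Qed.

Lemma fslice_te k : fslice (te R q) k = 1.
Proof. by rewrite te_tid fslice_tid. Qed.

Lemma fslice_ttr m p (X : tensor m p) k x y :
  fslice (ttr X) k x y = ((fslice X k y x)^* )%C.
Proof.
rewrite !fsliceE conjc_sum (reindex_inj (@trev_inj q)); apply: eq_bigr => j _.
by rewrite ffunE trevK !mxE conjcM conjc_real mulnC omega_trev conjcX omega_conj
  mulnC.
Qed.

Lemma fslice_ttrace n (A : tensor n n) k :
  fslice (ttrace A) k = (\tr (fslice A k))%:M.
Proof.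
rewrite of_fourierK //; apply: conj_sym_scalar => k'.
by rewrite /mxtrace conjc_sum; apply: eq_bigr => i _; exact: fslice_conj_sym.
Qed.

Lemma fslice_tinner n s (X Y : tensor n s) k :
  fslice (tinner X Y) k = (fdot (fslice X k) (fslice Y k))%:M.
Proof.
rewrite fslice_ttrace fslice_tprod /fdot /mxtrace exchange_big /=; congr (_%:M).
apply: eq_bigr => i _; rewrite mxE; apply: eq_bigr => j _.
by rewrite fslice_ttr.
Qed.

Lemma fnorm_trev m p (W : tensor m p) k :
  fnorm (fslice W (trev k)) = fnorm (fslice W k).
Proof.
rewrite /fnorm; congr Num.sqrt; apply: eq_bigr => i _; apply: eq_bigr => j _.
by rewrite fslice_conj_sym; case: (fslice W k i j) => a b /=; rewrite sqrrN.
Qed.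

Lemma fslice_normQ m p (W : tensor m p) k :
  fslice (normQ W) k = ((fnorm (fslice W k))^-1)%:C%C *: fslice W k.
Proof.
rewrite of_fourierK // => k' x y.
by rewrite !mxE fnorm_trev fslice_conj_sym conjcM conjc_real.
Qed.

Lemma fslice_normA m p (W : tensor m p) k :
  fslice (normA W) k = ((fnorm (fslice W k))%:C%C)%:M.
Proof.
rewrite of_fourierK //; apply: conj_sym_scalar => k'.
by rewrite fnorm_trev conjc_real.
Qed.

End FourierSlices.

(* [rewrite] compares candidate subterms up to conversion, and comparing two
   distinct tensor expressions built from these operations unfolds the DFT sums
   on both sides, which takes exponential time.  The rest of the development
   uses locked copies, which are unlocked only in the final theorem. *)
Section LockedOperations.
Variables (R : realType) (q : nat).
Local Notation tensor m p := (tensor R m p q).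

Fact tensor_key : unit. Proof. by []. Qed.

Definition tprodL {m n p} := locked_with tensor_key (@tprod R m n p q).
Definition tscaleL {m p} := locked_with tensor_key (@tscale R m p q).
Definition tinnerL {n s} := locked_with tensor_key (@tinner R n s q).
Definition normQL {m p} := locked_with tensor_key (@normQ R m p q).
Definition normAL {m p} := locked_with tensor_key (@normA R m p q).

Lemma tprodLE m n p : @tprodL m n p = @tprod R m n p q.
Proof. exact: unlock. Qed.
Lemma tscaleLE m p : @tscaleL m p = @tscale R m p q.
Proof. exact: unlock. Qed.
Lemma tinnerLE n s : @tinnerL n s = @tinner R n s q.
Proof. exact: unlock. Qed.
Lemma normQLE m p : @normQL m p = @normQ R m p q.
Proof. exact: unlock. Qed.
Lemma normALE m p : @normAL m p = @normA R m p q.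
Proof. exact: unlock. Qed.

Lemma fslice_tprodL m n p (A : tensor m n) (B : tensor n p) k :
  fslice (tprodL A B) k = fslice A k *m fslice B k.
Proof. by rewrite tprodLE fslice_tprod. Qed.

Lemma fslice_tscaleL m p (a : tube R q) (B : tensor m p) k :
  fslice (tscaleL a B) k = fslice a k 0 0 *: fslice B k.
Proof. by rewrite tscaleLE fslice_tscale. Qed.

Lemma fslice_tinnerL n s (X Y : tensor n s) k :
  fslice (tinnerL X Y) k = (fdot (fslice X k) (fslice Y k))%:M.
Proof. by rewrite tinnerLE fslice_tinner. Qed.

Lemma fslice_normQL m p (W : tensor m p) k :
  fslice (normQL W) k = ((fnorm (fslice W k))^-1)%:C%C *: fslice W k.
Proof. by rewrite normQLE fslice_normQ. Qed.

Lemma fslice_normAL m p (W : tensor m p) k :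
  fslice (normAL W) k = ((fnorm (fslice W k))%:C%C)%:M.
Proof. by rewrite normALE fslice_normA. Qed.

End LockedOperations.

Section TubeModule.
Variables (R : realType) (q : nat).
Local Notation tensor m p := (tensor R m p q).
Local Notation tube := (tube R q).

Lemma tprodA m n p l (A : tensor m n) (B : tensor n p) (D : tensor p l) :
  tprodL A (tprodL B D) = tprodL (tprodL A B) D.
Proof. by apply: tensorP => k; rewrite !fslice_tprodL mulmxA. Qed.

Lemma tprodDr m n p (A : tensor m n) (B D : tensor n p) :
  tprodL A (B + D) = tprodL A B + tprodL A D.
Proof.
by apply: tensorP => k; rewrite fslice_tprodL !fsliceD !fslice_tprodL mulmxDr.
Qed.

Lemma tprod0r m n p (A : tensor m n) : tprodL A (0 : tensor n p) = 0.
Proof. by apply: tensorP => k; rewrite fslice_tprodL !fslice0 mulmx0. Qed.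

Lemma tprod_sumr m n p (A : tensor m n) I (r : seq I) (P : pred I)
    (F : I -> tensor n p) :
  tprodL A (\sum_(i <- r | P i) F i) = \sum_(i <- r | P i) tprodL A (F i).
Proof.
elim/big_rec2: _ => [|i B FB _ <-]; [exact: tprod0r | exact: tprodDr].
Qed.

Lemma tprod_tidl n p (B : tensor n p) : tprodL (tid R n q) B = B.
Proof. by apply: tensorP => k; rewrite fslice_tprodL fslice_tid mul1mx. Qed.

Lemma tprod_ter (a : tube) : tprodL a (te R q) = a.
Proof. by apply: tensorP => k; rewrite fslice_tprodL fslice_te mulmx1. Qed.

Lemma tprod_tscale m n p (A : tensor m n) (a : tube) (B : tensor n p) :
  tprodL A (tscaleL a B) = tscaleL a (tprodL A B).
Proof.
apply: tensorP => k.
by rewrite fslice_tprodL !fslice_tscaleL fslice_tprodL scalemxAr.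
Qed.

Lemma tscaleDr m p (a : tube) (B D : tensor m p) :
  tscaleL a (B + D) = tscaleL a B + tscaleL a D.
Proof.
by apply: tensorP => k; rewrite fslice_tscaleL !fsliceD !fslice_tscaleL scalerDr.
Qed.

Lemma tscale0r m p (a : tube) : tscaleL a (0 : tensor m p) = 0.
Proof. by apply: tensorP => k; rewrite fslice_tscaleL !fslice0 scaler0. Qed.

Lemma tscale_sumr m p (a : tube) I (r : seq I) (P : pred I)
    (F : I -> tensor m p) :
  tscaleL a (\sum_(i <- r | P i) F i) = \sum_(i <- r | P i) tscaleL a (F i).
Proof.
elim/big_rec2: _ => [|i B FB _ <-]; [exact: tscale0r | exact: tscaleDr].
Qed.

Lemma tscaleDl m p (a b : tube) (B : tensor m p) :
  tscaleL (a + b) B = tscaleL a B + tscaleL b B.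
Proof.
by apply: tensorP => k; rewrite fsliceD !fslice_tscaleL fsliceD mxE scalerDl.
Qed.

Lemma tscaleBl m p (a b : tube) (B : tensor m p) :
  tscaleL (a - b) B = tscaleL a B - tscaleL b B.
Proof.
by apply: tensorP => k; rewrite fsliceB !fslice_tscaleL fsliceB !mxE scalerBl.
Qed.

Lemma tscale0l m p (B : tensor m p) : tscaleL 0 B = 0.
Proof. by apply: tensorP => k; rewrite fslice_tscaleL !fslice0 mxE scale0r. Qed.

Lemma tscaleA m p (a b : tube) (B : tensor m p) :
  tscaleL a (tscaleL b B) = tscaleL (tprodL a b) B.
Proof.
apply: tensorP => k.
by rewrite !fslice_tscaleL fslice_tprodL [in RHS]mxE big_ord1 scalerA.
Qed.

Lemma tscale1 m p (B : tensor m p) : tscaleL (te R q) B = B.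
Proof. by apply: tensorP => k; rewrite fslice_tscaleL fslice_te mxE scale1r. Qed.

Lemma tinner_tscaler n s (X Y : tensor n s) (a : tube) :
  tinnerL X (tscaleL a Y) = tprodL a (tinnerL X Y).
Proof.
apply: tensorP => k; rewrite fslice_tinnerL fslice_tscaleL fdotZr fslice_tprodL.
rewrite fslice_tinnerL mul_mx_scalar [in RHS](mx11_scalar (fslice a k)).
by rewrite scale_scalar_mx mulrC.
Qed.

Lemma tinner_sumr n s (X : tensor n s) I (r : seq I) (P : pred I)
    (F : I -> tensor n s) :
  tinnerL X (\sum_(i <- r | P i) F i) = \sum_(i <- r | P i) tinnerL X (F i).
Proof.
apply: tensorP => k; rewrite fslice_tinnerL !fslice_sum fdot_sumr raddf_sum.
by apply: eq_bigr => i _; rewrite fslice_tinnerL.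
Qed.

Definition inv_normA m p (W : tensor m p) : tube :=
  of_fourier (fun k => (((fnorm (fslice W k))^-1)%:C%C)%:M).

Lemma normQ_tscale m p (W : tensor m p) : normQL W = tscaleL (inv_normA W) W.
Proof.
apply: tensorP => k; rewrite fslice_normQL fslice_tscaleL of_fourierK ?mxE //.
by apply: conj_sym_scalar => k'; rewrite fnorm_trev conjc_real.
Qed.

Lemma normA_tscale m p (W : tensor m p) :
  no_breakdown W -> W = tscaleL (normAL W) (normQL W).
Proof.
move=> W_nz; apply: tensorP => k; rewrite fslice_tscaleL fslice_normAL fslice_normQL.
by rewrite mxE mulr1n scalerA -rmorphM mulfV ?W_nz // scale1r.
Qed.

End TubeModule.

Section TubeSpan.
Variables (R : realType) (q m p : nat).
Local Notation tensor := (tensor R m p q).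

Definition tspan (P : nat -> tensor) (j : nat) (X : tensor) : Prop :=
  exists b : nat -> tube R q, X = \sum_(1 <= i < j.+1) tscaleL (b i) (P i).

Implicit Types (P Q : nat -> tensor) (X Y : tensor).

Lemma tspan0 P j : tspan P j 0.
Proof. by exists (fun=> 0); rewrite big1 // => i _; rewrite tscale0l. Qed.

Lemma tspanD P j X Y : tspan P j X -> tspan P j Y -> tspan P j (X + Y).
Proof.
move=> [b ->] [c ->]; exists (fun i => b i + c i); rewrite -big_split /=.
by apply: eq_bigr => i _; rewrite tscaleDl.
Qed.

Lemma tspanB P j X Y : tspan P j X -> tspan P j Y -> tspan P j (X - Y).
Proof.
move=> [b ->] [c ->]; exists (fun i => b i - c i); rewrite -sumrB /=.
by apply: eq_bigr => i _; rewrite tscaleBl.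
Qed.

Lemma tspanZ P j a X : tspan P j X -> tspan P j (tscaleL a X).
Proof.
move=> [b ->]; exists (fun i => tprodL a (b i)); rewrite tscale_sumr.
by apply: eq_bigr => i _; rewrite tscaleA.
Qed.

Lemma tspan_sum P j (Y : nat -> tensor) i0 i1 :
  (forall i, (i0 <= i < i1)%N -> tspan P j (Y i)) ->
  tspan P j (\sum_(i0 <= i < i1) Y i).
Proof.
move=> spanY; rewrite big_nat_cond; apply: (big_ind (tspan P j)).
- exact: tspan0.
- exact: tspanD.
by move=> i /andP[/spanY].
Qed.

Lemma tspanS P i j X : (i <= j)%N -> tspan P i X -> tspan P j X.
Proof.
move=> ij [b ->]; exists (fun l => if (l <= i)%N then b l else 0).
rewrite [RHS](@big_cat_nat _ _ _ i.+1) //= [X in _ = _ + X]big1_seq ?addr0 => [|l].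
  by apply: eq_big_nat => l /andP[_]; rewrite ltnS => ->.
by rewrite mem_index_iota ltnNge => /and3P[_ /negPf-> _]; rewrite tscale0l.
Qed.

Lemma tspan_mem P i j : (1 <= i <= j)%N -> tspan P j (P i).
Proof.
move=> /andP[i_gt0 ij]; apply: (tspanS ij).
exists (fun l => if l == i then te R q else 0).
rewrite big_nat_recr //= eqxx tscale1 big1_seq ?add0r // => l.
by rewrite mem_index_iota => /and3P[_ _ li]; rewrite (ltn_eqF li) tscale0l.
Qed.

Lemma tspan_trans P Q i j X :
  (forall l, (1 <= l <= i)%N -> tspan Q j (P l)) -> tspan P i X -> tspan Q j X.
Proof.
move=> PQ [b ->]; apply: tspan_sum => l /andP[l_gt0 li].
by apply/tspanZ/PQ; rewrite l_gt0 -ltnS.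
Qed.

Lemma tspan_free P (b : nat -> tube R q) j :
  (forall i l, (1 <= i <= j)%N -> (1 <= l <= j)%N ->
     tinnerL (P i) (P l) = if i == l then te R q else 0) ->
  \sum_(1 <= i < j.+1) tscaleL (b i) (P i) = 0 ->
  forall i, (1 <= i <= j)%N -> b i = 0.
Proof.
move=> orthoP sum0 i ij; have := congr1 (tinnerL (P i)) sum0.
rewrite tinner_sumr (eq_big_nat _ _ (F2 := fun l => tprodL (b l)
  (if i == l then te R q else 0))) => [|l lj]; last by rewrite tinner_tscaler orthoP.
rewrite (bigD1_seq i) ?mem_index_iota ?iota_uniq //= eqxx tprod_ter big1 => [|l].
  rewrite addr0 => ->; apply: tensorP => k.
  by rewrite fslice_tinnerL !fslice0 fdot0r raddf0.
by rewrite eq_sym => /negPf->; rewrite tprod0r.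
Qed.

End TubeSpan.

Section Krylov.
Variables (R : realType) (q n s : nat) (A : tensor R n n q) (V : tensor R n s q).

Definition krylov (i : nat) : tensor R n s q := tprodL (tpow A i.-1) V.

Lemma tpowS i : tpow A i.+1 = tprodL A (tpow A i).
Proof. by rewrite tprodLE. Qed.

Lemma krylov1 : krylov 1 = V.
Proof. exact: tprod_tidl. Qed.

Lemma tprod_krylov i : (0 < i)%N -> tprodL A (krylov i) = krylov i.+1.
Proof. by case: i => // i _; rewrite /krylov tprodA -tpowS. Qed.

Lemma tspan_krylov_tprod j X :
  tspan krylov j X -> tspan krylov j.+1 (tprodL A X).
Proof.
move=> [b ->]; rewrite tprod_sumr; apply: tspan_sum => i /andP[i_gt0 ij].
by rewrite tprod_tscale tprod_krylov //; apply/tspanZ/tspan_mem; rewrite ltnS ij.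
Qed.

End Krylov.

Section ArnoldiOrthonormality.
Variables (R : rcfType) (n s m : nat).
Variables (v : nat -> 'M[R[i]]_(n, s)) (w : nat -> nat -> 'M[R[i]]_(n, s)).
Variables (h : nat -> nat -> R[i]) (c : nat -> R[i]).
Hypothesis v1_unit : fdot (v 1) (v 1) = 1.
Hypothesis arnoldi_step : forall j i, (1 <= j <= m)%N -> (1 <= i <= j)%N ->
  h i j = fdot (v i) (w j i.-1) /\ w j i = w j i.-1 - h i j *: v i.
Hypothesis arnoldi_next : forall j, (1 <= j <= m)%N ->
  v j.+1 = c j *: w j j /\ fdot (v j.+1) (v j.+1) = 1.

Definition orthonormal_upto j :=
  forall i l, (1 <= i <= j)%N -> (1 <= l <= j)%N -> fdot (v i) (v l) = (i == l)%:R.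

Lemma arnoldi_residual_orth j : (1 <= j <= m)%N -> orthonormal_upto j ->
  forall i l, (i <= j)%N -> (1 <= l <= i)%N -> fdot (v l) (w j i) = 0.
Proof.
move=> jm ortho; elim=> [|i IH] l ij /andP[l_gt0 li]; first by case: l l_gt0 li.
have [h_def ->] := arnoldi_step jm (ij : (1 <= i.+1 <= j)%N).
rewrite fdotBr fdotZr; case: (ltngtP l i.+1) li => // [l_lt _ | -> _].
  have l_in_i : (1 <= l <= i)%N by rewrite l_gt0 -ltnS.
  have l_in_j : (1 <= l <= j)%N by rewrite l_gt0 ltnW // (leq_trans l_lt).
  by rewrite IH ?(ltnW ij) // ortho // (ltn_eqF l_lt) mulr0 subrr.
by rewrite -h_def ortho ?ij // eqxx mulr1 subrr.
Qed.

Lemma arnoldi_orthonormal j : (j <= m)%N -> orthonormal_upto j.+1.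
Proof.
elim: j => [_ [|[|i]] [|[|l]] // _ _|j IH jm]. (* i = l = 1 is [v1_unit] *)
have ortho := IH (ltnW jm); have jm' : (1 <= j.+1 <= m)%N := jm.
have [v_next v_unit] := arnoldi_next jm'.
have new_orth l : (1 <= l <= j.+1)%N -> fdot (v l) (v j.+2) = 0.
  move=> l_in; rewrite v_next fdotZr.
  by rewrite (arnoldi_residual_orth jm' ortho (leqnn _) l_in) mulr0.
move=> i l /andP[i_gt0 ij] /andP[l_gt0 lj].
case: ltngtP ij => // [ij _ | -> _]; case: ltngtP lj => // [lj _ | -> _].
- by rewrite ortho ?i_gt0 ?l_gt0.
- by rewrite new_orth ?i_gt0 // (ltn_eqF ij).
- by rewrite fdotC new_orth ?l_gt0 // conjc0.
by rewrite v_unit.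
Qed.

End ArnoldiOrthonormality.

Section TubalGlobalArnoldi.
Variables (R : realType) (q n s m : nat).
Variables (A : tensor R n n q) (V : tensor R n s q) (Vs : nat -> tensor R n s q).
Variables (H : nat -> nat -> tube R q) (W : nat -> nat -> tensor R n s q).
Hypothesis V_nz : no_breakdown V.
Hypothesis V1 : Vs 1 = normQL V.
Hypothesis W0 : forall j, (1 <= j <= m)%N -> W j 0 = tprodL A (Vs j).
Hypothesis Wstep : forall j i, (1 <= j <= m)%N -> (1 <= i <= j)%N ->
  H i j = tinnerL (Vs i) (W j i.-1) /\ W j i = W j i.-1 - tscaleL (H i j) (Vs i).
Hypothesis Wnext : forall j, (1 <= j <= m)%N ->
  [/\ no_breakdown (W j j), Vs j.+1 = normQL (W j j) & H j.+1 j = normAL (W j j)].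

Local Notation K := (krylov A V).

Lemma arnoldi_T_orthonormal i l : (1 <= i <= m.+1)%N -> (1 <= l <= m.+1)%N ->
  tinnerL (Vs i) (Vs l) = if i == l then te R q else 0.
Proof.
move=> i_in l_in; apply: tensorP => k; rewrite fslice_tinnerL.
rewrite (@arnoldi_orthonormal _ _ _ m (fun i => fslice (Vs i) k)
  (fun j i => fslice (W j i) k) (fun i j => fslice (H i j) k 0 0)
  (fun j => ((fnorm (fslice (W j j) k))^-1)%:C%C) _ _ _ m) //.
- by case: eqP => _; rewrite ?fslice_te ?fslice0 ?raddf0.
- by rewrite V1 fslice_normQL fdot_normalized.
- move=> j i' jm i'j; have [-> ->] := Wstep jm i'j.
  by rewrite fsliceB fslice_tscaleL fslice_tinnerL mxE mulr1n.
- move=> j jm; have [W_nz -> _] := Wnext jm.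
  by rewrite fslice_normQL fdot_normalized.
Qed.

Lemma arnoldi_residual_in_krylov j : (1 <= j <= m)%N ->
    (forall i, (1 <= i <= j)%N -> tspan K i (Vs i)) ->
  forall i, (i <= j)%N -> tspan K j.+1 (W j i).
Proof.
move=> jm VK; have /andP[j_gt0 _] := jm; elim=> [_ | i IH ij].
  by rewrite W0 //; apply: tspan_krylov_tprod; apply: VK; rewrite j_gt0 leqnn.
have [_ ->] := Wstep jm (ij : (1 <= i.+1 <= j)%N).
apply: tspanB; first exact: IH (ltnW ij).
by apply/tspanZ/(@tspanS _ _ _ _ _ i.+1)/VK; rewrite ?ij // ltnW.
Qed.

Lemma arnoldi_in_krylov i : (1 <= i <= m.+1)%N -> tspan K i (Vs i).
Proof.
suff VK j : (j <= m)%N -> forall l, (1 <= l <= j.+1)%N -> tspan K l (Vs l).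
  by case/andP=> i_gt0 im; apply: (VK m); rewrite ?i_gt0.
elim: j => [_ l /andP[l_gt0 l1] | j IH jm l /andP[l_gt0]].
  have -> : l = 1%N by apply/eqP; rewrite eqn_leq l1.
  rewrite V1 normQ_tscale; apply: tspanZ.
  by rewrite -[X in tspan _ _ X](krylov1 A V); apply: tspan_mem.
rewrite leq_eqVlt ltnS => /orP[/eqP-> | lj]; last first.
  by apply: IH; rewrite ?l_gt0 // ltnW.
have jm' : (1 <= j.+1 <= m)%N := jm.
have [_ -> _] := Wnext jm'; rewrite normQ_tscale; apply/tspanZ.
by apply: arnoldi_residual_in_krylov => // l'; apply: IH (ltnW jm) l'.
Qed.

Lemma arnoldi_relation l : (1 <= l <= m)%N -> tspan Vs l.+1 (tprodL A (Vs l)).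
Proof.
move=> lm; have [W_nz Vnext _] := Wnext lm.
have telescope i : (i <= l)%N -> tspan Vs l (W l 0 - W l i).
  elim: i => [_ | i IH il]; first by rewrite subrr; apply: tspan0.
  have [_ ->] := Wstep lm (il : (1 <= i.+1 <= l)%N).
  rewrite opprD opprK addrA; apply: tspanD; first exact: IH (ltnW il).
  by apply/tspanZ/tspan_mem.
rewrite -W0 // -(subrK (W l l) (W l 0)); apply: tspanD.
  exact/(tspanS (leqnSn l))/telescope.
by rewrite (normA_tscale W_nz) -Vnext; apply/tspanZ/tspan_mem; rewrite ltnS leqnn.
Qed.

Lemma tspan_arnoldi_tprod i X : (i <= m)%N ->
  tspan Vs i X -> tspan Vs i.+1 (tprodL A X).
Proof.
move=> im [b ->]; rewrite tprod_sumr; apply: tspan_sum => l /andP[l_gt0 li].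
rewrite tprod_tscale; apply/tspanZ/(@tspanS _ _ _ _ _ l.+1) => //.
by apply: arnoldi_relation; rewrite l_gt0 (leq_trans _ im) // -ltnS.
Qed.

Lemma krylov_in_arnoldi_span i : (1 <= i <= m.+1)%N -> tspan Vs i (K i).
Proof.
elim: i => [// | [|i] IH /andP[_ im]].
  by rewrite krylov1 (normA_tscale V_nz) -V1; apply/tspanZ/tspan_mem.
rewrite -tprod_krylov //; apply: tspan_arnoldi_tprod => //.
by apply: IH; exact: ltnW.
Qed.

Lemma arnoldi_krylov_basis :
  [/\ forall i l, (1 <= i <= m)%N -> (1 <= l <= m)%N ->
        tinnerL (Vs i) (Vs l) = if i == l then te R q else 0,
      forall j, (1 <= j <= m)%N -> tspan K m (Vs j),
      forall X, tspan K m X -> tspan Vs m X &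
      forall b, \sum_(1 <= i < m.+1) tscaleL (b i) (Vs i) = 0 ->
        forall i, (1 <= i <= m)%N -> b i = 0].
Proof.
have ortho i l : (1 <= i <= m)%N -> (1 <= l <= m)%N ->
    tinnerL (Vs i) (Vs l) = if i == l then te R q else 0.
  move=> /andP[i_gt0 im] /andP[l_gt0 lm].
  by rewrite arnoldi_T_orthonormal ?i_gt0 ?l_gt0 ?leqW.
split=> //.
- move=> j /andP[j_gt0 jm]; apply: tspanS (jm) _.
  by apply: arnoldi_in_krylov; rewrite j_gt0 leqW.
- move=> X; apply: tspan_trans => i /andP[i_gt0 im]; apply: tspanS (im) _.
  by apply: krylov_in_arnoldi_span; rewrite i_gt0 leqW.
- by move=> b; apply: tspan_free.
Qed.

End TubalGlobalArnoldi.

Theorem proposition6 (R : realType) (n s n3 m : nat)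
  (A : tensor R n n n3) (V : tensor R n s n3)
  (Vs : nat -> tensor R n s n3) (H : nat -> nat -> tube R n3) (r : tube R n3)
  (W : nat -> nat -> tensor R n s n3) :
  arnoldi_run m A V Vs H r W ->
  [/\ (* T-orthonormality *)
      (forall i j, (1 <= i <= m)%N -> (1 <= j <= m)%N ->
         tinner (Vs i) (Vs j) = (if i == j then te R n3 else to R n3)),
      (* each V_j lies in TK^g_m(A, V) *)
      (forall j, (1 <= j <= m)%N -> in_TKg m A V (Vs j)),
      (* V_1, ..., V_m span TK^g_m(A, V) over tubes *)
      (forall X, in_TKg m A V X ->
         exists b : nat -> tube R n3, X = \sum_(1 <= i < m.+1) tscale (b i) (Vs i)) &
      (* V_1, ..., V_m are linearly independent over tubes *)
      (forall b : nat -> tube R n3,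
         \sum_(1 <= i < m.+1) tscale (b i) (Vs i) = 0 ->
         forall i, (1 <= i <= m)%N -> b i = to R n3)].
Proof.
case=> [[V_nz [V1 _]] W0 Wstep Wnext].
rewrite -normQLE in V1; rewrite -tprodLE in W0.
rewrite -tinnerLE -tscaleLE in Wstep; rewrite -normQLE -normALE in Wnext.
have [ortho inK span free] := arnoldi_krylov_basis V_nz V1 W0 Wstep Wnext.
by rewrite /in_TKg /to -tinnerLE -tscaleLE -tprodLE; split.
Qed.
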